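(* Consider offline and online linear mixture MDPs with common state space $\mathcal S$, action space $\mathcal A$, horizon $H$, and identical reward functions $r=r^{\mathrm{off}}:\mathcal S\times\mathcal A\to[0,1]$, with $P(s'\mid s,a)=\langle\theta^*,\phi(s'\mid s,a)\rangle$, $P^{\mathrm{off}}(s'\mid s,a)=\langle\theta^{\mathrm{off},*},\phi(s'\mid s,a)\rangle$ for a feature map $\phi$ with $\sum_{s'}|\phi_j(s'\mid s,a)|\le1$ for all $(s,a,j)$, and $\|\theta^*-\theta^{\mathrm{off},*}\|_2\le\Delta$. Then for any fixed policy $\pi$, \[ \big|V_1^{\pi}(s_1)-V_1^{\mathrm{off},\pi}(s_1)\big|\le\frac{H(H-1)}{2}\Delta\sqrt d . \]
   Context: For a deterministic policy $\pi=(\pi_h)_{h\le H}$, $V^\pi_h$ and $V^{\mathrm{off},\pi}_h$ are the stage-$h$ value functions of $\pi$ under $P$ and $P^{\mathrm{off}}$ respectively: $V_h^\pi(s)=\mathbb E_\pi[\sum_{i=h}^Hr(s_i,a_i)\mid s_h=s]$, with $V^\pi_{H+1}=V^{\mathrm{off},\pi}_{H+1}=0$; $s_1$ is a state and both value functions are evaluated there. *)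

From mathcomp Require Import all_boot all_order all_algebra.
Set Implicit Arguments. Unset Strict Implicit. Unset Printing Implicit Defensive.
Import Order.TTheory GRing.Theory Num.Theory.
Local Open Scope ring_scope.

Section MDP.
Variables (R : rcfType) (S A : finType) (d : nat).

Definition mix_kernel (theta : 'I_d -> R) (phi : S -> A -> S -> 'I_d -> R)
  (s : S) (a : A) (s' : S) : R := \sum_(j < d) theta j * phi s a s' j.

Definition is_kernel (P : S -> A -> S -> R) : Prop :=
  (forall s a s', 0 <= P s a s') /\ (forall s a, \sum_(s' : S) P s a s' = 1).

(* Value with k remaining steps, horizon H, deterministic non-stationary
   policy pi (pi h is the stage-h decision rule, stages 1..H).
   With k = k'.+1 remaining steps the current stage is H - k'. *)
Fixpoint value_rem (P : S -> A -> S -> R) (r : S -> A -> R)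
  (pi : nat -> S -> A) (H k : nat) (s : S) : R :=
  match k with
  | 0 => 0
  | k'.+1 =>
      let a := pi (H - k')%N s in
      r s a + \sum_(s' : S) P s a s' * value_rem P r pi H k' s'
  end.

(* Stage-h value function V_h^pi, for 1 <= h <= H+1 (V_{H+1} = 0). *)
Definition value (P : S -> A -> S -> R) (r : S -> A -> R)
  (pi : nat -> S -> A) (H h : nat) (s : S) : R :=
  value_rem P r pi H (H.+1 - h)%N s.

Definition norm2 (v : 'I_d -> R) : R := Num.sqrt (\sum_(j < d) v j ^+ 2).
End MDP.

(* The simulation lemma: for kernels P, Q with the same rewards and policy,
   V_{k+1} - W_{k+1} = (P - Q) V_k + Q (V_k - W_k).  If the rows of P and Q
   are eps-close in L1, then since |V_k| <= k the first term is at most k eps,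
   so the gap grows by at most k eps per step and after H steps it is at most
   (0 + 1 + ... + (H-1)) eps = C(H,2) eps.  For linear mixtures each phi_j has
   L1 mass at most 1, so the L1 distance of the rows is at most
   sum_j |theta_j - theta'_j| <= sqrt d |theta - theta'|_2 (Cauchy-Schwarz). *)
From mathcomp Require Import all_boot all_order all_algebra.
From mathcomp Require Import ring.
Set Implicit Arguments. Unset Strict Implicit. Unset Printing Implicit Defensive.
Import Order.TTheory GRing.Theory Num.Theory.
Local Open Scope ring_scope.

Lemma sqr_sum_le_card (R : realDomainType) (I : finType) (x : I -> R) :
  (\sum_i x i) ^+ 2 <= #|I|%:R * \sum_i x i ^+ 2.
Proof.
have expand i : \sum_j (x i - x j) ^+ 2
    = #|I|%:R * x i ^+ 2 - 2 * x i * \sum_j x j + \sum_j x j ^+ 2.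
  under eq_bigr do rewrite sqrrB.
  rewrite big_split sumrB /= sumr_const mulr_natl mulr_sumr.
  by congr (_ - _ + _); apply: eq_bigr => j _; rewrite -mulrA mulr_natl.
have sum_sqr_diff : \sum_i \sum_j (x i - x j) ^+ 2
    = 2 * (#|I|%:R * \sum_i x i ^+ 2 - (\sum_i x i) ^+ 2).
  rewrite (eq_bigr _ (fun i _ => expand i)) big_split sumrB /= sumr_const.
  rewrite -mulr_suml -!mulr_sumr -[(\sum_j x j ^+ 2) *+ _]mulr_natl.
  ring.
have : 0 <= \sum_i \sum_j (x i - x j) ^+ 2.
  by apply: sumr_ge0 => i _; apply: sumr_ge0 => j _; exact: sqr_ge0.
by rewrite sum_sqr_diff pmulr_rge0 // subr_ge0.
Qed.

Lemma sum_norm_le_sqrt_card (R : rcfType) (I : finType) (x : I -> R) :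
  \sum_i `|x i| <= Num.sqrt #|I|%:R * Num.sqrt (\sum_i x i ^+ 2).
Proof.
have sum_ge0 : 0 <= \sum_i `|x i| by apply: sumr_ge0.
have rhs_ge0 : 0 <= #|I|%:R * \sum_i x i ^+ 2.
  by rewrite mulr_ge0 ?sumr_ge0 // => i _; exact: sqr_ge0.
rewrite -sqrtrM // -(ger0_norm sum_ge0) -sqrtr_sqr ler_sqrt //.
apply: le_trans (sqr_sum_le_card (fun i => `|x i|)) _.
by rewrite (eq_bigr _ (fun i _ => real_normK (num_real (x i)))).
Qed.

Lemma natr_bin2 (R : numFieldType) (n : nat) :
  'C(n, 2)%:R = (n * (n - 1))%:R / 2 :> R.
Proof.
rewrite subn1 -[n.-1 in RHS]bin1 mul_bin_diag natrM mulrAC divff ?mul1r //.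
by rewrite pnatr_eq0.
Qed.

Lemma norm_sum_mul_le (R : numDomainType) (I : finType) (f V : I -> R) (M : R) :
  (forall i, `|V i| <= M) -> `|\sum_i f i * V i| <= (\sum_i `|f i|) * M.
Proof.
move=> hV; apply: le_trans (ler_norm_sum _ _ _) _.
rewrite mulr_suml; apply: ler_sum => i _.
by rewrite normrM ler_wpM2l.
Qed.

Section SimulationLemma.
Variables (R : rcfType) (S A : finType).

Lemma kernel_sum_norm (P : S -> A -> S -> R) s a :
  is_kernel P -> \sum_s' `|P s a s'| = 1.
Proof.
case=> P_ge0 P_sum1; rewrite -(P_sum1 s a).
by apply: eq_bigr => s' _; rewrite ger0_norm.
Qed.

Lemma norm_kernel_mean_le (P : S -> A -> S -> R) s a (V : S -> R) (M : R) :
  is_kernel P -> (forall s', `|V s'| <= M) -> `|\sum_s' P s a s' * V s'| <= M.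
Proof.
move=> hP hV; rewrite -[M]mul1r -(kernel_sum_norm s a hP).
exact: norm_sum_mul_le.
Qed.

Variables (r : S -> A -> R) (pi : nat -> S -> A) (H : nat).
Hypothesis r_le1 : forall s a, `|r s a| <= 1.

Lemma norm_value_rem_le (P : S -> A -> S -> R) k s :
  is_kernel P -> `|value_rem P r pi H k s| <= k%:R.
Proof.
move=> hP; elim: k s => [|k IH] s /=; first by rewrite normr0.
apply: le_trans (ler_normD _ _) _.
rewrite -natr1 addrC lerD ?r_le1 //.
exact: norm_kernel_mean_le.
Qed.

Lemma value_rem_simulation (P Q : S -> A -> S -> R) (eps : R) :
  is_kernel P -> is_kernel Q ->
  (forall s a, \sum_s' `|P s a s' - Q s a s'| <= eps) ->
  forall k s, `|value_rem P r pi H k s - value_rem Q r pi H k s|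
                <= 'C(k, 2)%:R * eps.
Proof.
move=> hP hQ hPQ; elim=> [|k IH] s /=; first by rewrite subrr normr0 mul0r.
set a := pi (H - k)%N s.
set V := value_rem P r pi H k; set W := value_rem Q r pi H k.
have -> : r s a + \sum_s' P s a s' * V s' - (r s a + \sum_s' Q s a s' * W s')
    = \sum_s' (P s a s' - Q s a s') * V s' + \sum_s' Q s a s' * (V s' - W s').
  rewrite -big_split /= opprD addrACA subrr add0r -sumrB.
  by apply: eq_bigr => s' _; ring.
rewrite binS bin1 natrD mulrDl [in X in _ <= X]addrC.
apply: le_trans (ler_normD _ _) _; apply: lerD.
- apply: le_trans (norm_sum_mul_le _ (fun s' => norm_value_rem_le k s' hP)) _.
  by rewrite mulrC ler_wpM2l.
- exact: norm_kernel_mean_le.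
Qed.

End SimulationLemma.

Lemma mix_kernel_dist_le (R : rcfType) (S A : finType) (d : nat)
    (phi : S -> A -> S -> 'I_d -> R) (theta theta' : 'I_d -> R) s a :
  (forall j, \sum_s' `|phi s a s' j| <= 1) ->
  \sum_s' `|mix_kernel theta phi s a s' - mix_kernel theta' phi s a s'|
    <= \sum_j `|theta j - theta' j|.
Proof.
move=> phi_le1.
apply: le_trans (_ : \sum_s' \sum_j `|theta j - theta' j| * `|phi s a s' j| <= _).
  apply: ler_sum => s' _; rewrite /mix_kernel -sumrB.
  apply: le_trans (ler_norm_sum _ _ _) _; apply: ler_sum => j _.
  by rewrite -mulrBl normrM.
rewrite exchange_big /=; apply: ler_sum => j _.
by rewrite -mulr_sumr ler_piMr.
Qed.

Theorem propositionB1 (R : rcfType) (S A : finType) (d H : nat)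
  (r : S -> A -> R) (phi : S -> A -> S -> 'I_d -> R)
  (theta theta_off : 'I_d -> R) (Delta : R)
  (hr : forall s a, 0 <= r s a <= 1)
  (hphi : forall s a (j : 'I_d), \sum_(s' : S) `|phi s a s' j| <= 1)
  (hP : is_kernel (mix_kernel theta phi))
  (hPoff : is_kernel (mix_kernel theta_off phi))
  (hDelta : norm2 (fun j => theta j - theta_off j) <= Delta)
  (pi : nat -> S -> A) (s1 : S) :
  `| value (mix_kernel theta phi) r pi H 1 s1
     - value (mix_kernel theta_off phi) r pi H 1 s1 |
  <= (H * (H - 1))%:R / 2 * Delta * Num.sqrt d%:R.
Proof.
have r_le1 s a : `|r s a| <= 1.
  by have /andP[r_ge0 r_le] := hr s a; rewrite ger0_norm.
have dist_le s a :
    \sum_s' `|mix_kernel theta phi s a s' - mix_kernel theta_off phi s a s'|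
      <= Delta * Num.sqrt d%:R.
  apply: le_trans (mix_kernel_dist_le theta theta_off (hphi s a)) _.
  apply: le_trans (sum_norm_le_sqrt_card _) _.
  by rewrite card_ord mulrC ler_wpM2r ?sqrtr_ge0.
rewrite /value subSS subn0 -natr_bin2 -mulrA.
exact: (value_rem_simulation pi H r_le1 hP hPoff dist_le H s1).
Qed.
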